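(* Let $(\Omega,P)$ be a probability space, let $\mathbb{T}=\mathbb{R}$ or $\mathbb{Z}$, and let $\Theta=\{\theta_t\}_{t\in\mathbb{T}}$ be a family of measurable maps $\theta_t:\Omega\to\Omega$ with $(\theta_t)_*P=P$, $\theta_0=\mathrm{id}_\Omega$ and $\theta_s\circ\theta_t=\theta_{s+t}$ for all $s,t\in\mathbb{T}$. Let $\mathcal{X}$ be a topological space, $k$ a bounded continuous $\mathbb{C}$-valued positive definite kernel on $\mathcal{X}$, $\mathcal{M}\subset\mathcal{X}$ an open subset and $\Phi$ a random dynamical system on $\mathcal{M}$ with respect to $\Theta$. Then for every $x\in\mathcal{M}$ and every $t\in\mathbb{T}$, $$\iota^*K_{\Phi}^{t}\iota(k_x)=\int_\Omega k_{\Phi(t,\omega,x)}\,dP(\omega)$$ as elements of $\mathcal{H}_k$.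
   Context: A random dynamical system on $\mathcal{M}$ with respect to $\Theta$ is a measurable map $\Phi:\mathbb{T}\times\Omega\times\mathcal{M}\to\mathcal{M}$ with $\Phi(0,\omega,x)=x$ and $\Phi(t+s,\omega,x)=\Phi(t,\theta_s(\omega),\Phi(s,\omega,x))$. $\mathcal{H}_k$ is the RKHS of $k$ and $k_a:=k(a,\cdot)$. Let $M(\Omega,\mathcal{X})$ be the space of $\mathcal{X}$-valued random variables; a point $x\in\mathcal{X}$ is regarded as a constant random variable. Define the $\mathcal{B}(L^2(\Omega))$-valued positive definite kernel $\mathbf{k}$ on $M(\Omega,\mathcal{X})$ by $(\mathbf{k}(X,Y)f)(\omega)=k(X(\omega),Y(\omega))f(\omega)$, and let $\mathcal{H}_{\mathbf{k}}$ be its vector-valued RKHS: the unique Hilbert space of maps $M(\Omega,\mathcal{X})\to L^2(\Omega)$ containing $\mathbf{k}_Yf:=[X\mapsto \mathbf{k}(Y,X)f]$ for all $Y$, $f\in L^2(\Omega)$, with $\langle h,\mathbf{k}_Yf\rangle_{\mathcal{H}_{\mathbf{k}}}=\langle h(Y),f\rangle_{L^2(\Omega)}$. Define $\bm{\varphi}(t,X)(\omega):=\Phi(t,\theta_{-t}(\omega),X(\theta_{-t}(\omega)))$ for $X\in M(\Omega,\mathcal{M})$. Let $\mathcal{H}_{\mathbf{k},\Phi}$ be the closure in $\mathcal{H}_{\mathbf{k}}$ of $\mathrm{span}\{\mathbf{k}_Xh: X=\Phi(s,\cdot,x),\ x\in\mathcal{M},\ s\in\mathbb{T},\ h\in L^2(\Omega)\}$,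 and the $t$-th Perron–Frobenius operator $K_\Phi^t:\mathcal{H}_{\mathbf{k},\Phi}\to\mathcal{H}_{\mathbf{k},\Phi}$ is the linear operator with domain that span given by $K_\Phi^t\mathbf{k}_Xh=\mathbf{k}_{\bm{\varphi}(t,X)}h$. The map $\iota:\mathcal{H}_k\to\mathcal{H}_{\mathbf{k}}$ is the linear map determined by $\iota(k_x)=\mathbf{k}_x\mathbf{1}$ ($\mathbf{1}$ the constant function $1$), i.e. $\iota(h)(X)=h\circ X$; $\iota^*$ is its adjoint, given by $(\iota^*g)(x)=\mathbb{E}_P[g(x)]$. *)

From HB Require Import structures.
From mathcomp Require Import all_boot all_order all_algebra.
From mathcomp Require Import all_classical all_reals all_analysis.
From mathcomp Require Import complex.

Set Implicit Arguments.
Unset Strict Implicit.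
Unset Printing Implicit Defensive.

Import Order.TTheory GRing.Theory Num.Theory.
Import numFieldNormedType.Exports.
Local Open Scope classical_set_scope.
Local Open Scope ring_scope.

Section Defs.
Variable R : realType.

Definition Cx := R[i].

(* The time set T, viewed inside R: T = R (discrete = false) or T = Z
   (discrete = true). *)
Definition Tset (discrete : bool) : set R :=
  if discrete then [set t | t \is a Num.int] else setT.

Definition borel_set (X : topologicalType) (A : set X) : Prop :=
  <<s (@open X) >> A.

Definition cintegral d (Om : measurableType d) (P : {measure set Om -> \bar R})
  (f : Om -> Cx) : Cx :=
  (Rintegral P setT (fun w => complex.Re (f w)) +i* Rintegral P setT (fun w => complex.Im (f w)))%C.

Section Kernels.
Variable X : topologicalType.

Definition pos_def_kernel (k : X -> X -> Cx) : Prop :=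
  forall (n : nat) (c : 'I_n -> Cx) (x : 'I_n -> X),
    0 <= \sum_(i < n) \sum_(j < n) ((c i)^* * c j * k (x i) (x j))%C.

Definition bounded_kernel (k : X -> X -> Cx) : Prop :=
  exists B : R, forall x y, `|k x y| <= B%:C%C.

Definition continuous_kernel (k : X -> X -> Cx) : Prop :=
  continuous (fun p : X * X => complex.Re (k p.1 p.2)) /\
  continuous (fun p : X * X => complex.Im (k p.1 p.2)).
End Kernels.

Section Dyn.
Variables (d : measure_display) (Om : measurableType d).
Variables (discrete : bool).

Definition mds (P : {measure set Om -> \bar R}) (theta : R -> Om -> Om) : Prop :=
  [/\ forall t, Tset discrete t -> measurable_fun setT (theta t),
      forall t, Tset discrete t -> forall A, measurable A ->
        P (theta t @^-1` A) = P A,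
      theta 0 = id &
      forall s t, Tset discrete s -> Tset discrete t ->
        theta s \o theta t = theta (s + t)].

Variable X : topologicalType.

Definition rectangles : set_system (R * Om * X) :=
  [set E | exists A B C, measurable A /\
     measurable B /\ borel_set C /\ E = [set p | A p.1.1 /\ B p.1.2 /\ C p.2]].

Definition rds (theta : R -> Om -> Om) (M : set X) (Phi : R -> Om -> X -> X) : Prop :=
  [/\ forall t w x, Tset discrete t -> M x -> M (Phi t w x),
      (forall U, borel_set U ->
        <<s rectangles >>
          [set p | Tset discrete p.1.1 /\ M p.2 /\ U (Phi p.1.1 p.1.2 p.2)]),
      forall w x, M x -> Phi 0 w x = x &
      forall s t w x, Tset discrete s -> Tset discrete t -> M x ->
        Phi (t + s) w x = Phi t (theta s w) (Phi s w x)].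

(* ---- the vector-valued RKHS H_k-bold, represented on its generators ----
   Random variables M(Om, X) are represented by maps Om -> X, and elements of
   L^2(Om) by representatives Om -> C.  An element of H_k-bold is a map
   M(Om,X) -> L^2(Om). *)
Variable k : X -> X -> Cx.

Definition kbold_sec (Y : Om -> X) (f : Om -> Cx) : (Om -> X) -> Om -> Cx :=
  fun Z w => k (Y w) (Z w) * f w.

Definition span_elt (s : seq ((Om -> X) * (Om -> Cx))) : (Om -> X) -> Om -> Cx :=
  fun Z w => \sum_(p <- s) kbold_sec p.1 p.2 Z w.

Definition phibold (theta : R -> Om -> Om) (Phi : R -> Om -> X -> X) (t : R)
  (Y : Om -> X) : Om -> X :=
  fun w => Phi t (theta (- t) w) (Y (theta (- t) w)).

Definition PF (theta : R -> Om -> Om) (Phi : R -> Om -> X -> X) (t : R)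
  (s : seq ((Om -> X) * (Om -> Cx))) : seq ((Om -> X) * (Om -> Cx)) :=
  map (fun p => (phibold theta Phi t p.1, p.2)) s.

(* iota on span{k_x}: iota (sum_i c_i k_{x_i}) = sum_i k-bold_{x_i} (c_i 1),
   points x regarded as constant random variables *)
Definition iota_span (s : seq (Cx * X)) : seq ((Om -> X) * (Om -> Cx)) :=
  map (fun p => ((fun _ : Om => p.2), (fun _ : Om => p.1))) s.

Definition iota_adj (P : {measure set Om -> \bar R})
  (g : (Om -> X) -> Om -> Cx) : X -> Cx :=
  fun y => cintegral P (g (fun _ => y)).

(* H_k-valued integral  int_Om F(w) dP(w)  of F : Om -> H_k, identified (by
   the reproducing property <h, k_y> = h(y)) with the function
   y |-> int_Om F(w)(y) dP(w). *)
Definition Hk_integral (P : {measure set Om -> \bar R}) (F : Om -> X -> Cx) : X -> Cx :=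
  fun y => cintegral P (fun w => F w y).
End Dyn.
End Defs.

(* [iota k_x] is the constant random variable [x] with weight [1], so [K^t]
   maps it to [w |-> Phi(t, theta_{-t} w, x)] and [iota^*] evaluated at [y]
   is the expectation of [k(Phi(t, theta_{-t} w, x), y)].  As [theta_{-t}]
   preserves [P], this is the expectation of [k(Phi(t, w, x), y)].  Continuity
   of [k] and measurability of [Phi] make the integrands measurable. *)

From HB Require Import structures.
From mathcomp Require Import all_boot all_order all_algebra.
From mathcomp Require Import all_classical all_reals all_analysis.
From mathcomp Require Import measurable_realfun complex.
Set Implicit Arguments.
Unset Strict Implicit.
Unset Printing Implicit Defensive.

Import GRing.Theory Num.Theory.
Import numFieldNormedType.Exports.
Local Open Scope classical_set_scope.
Local Open Scope ring_scope.

Section measure_preserving_integral.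
Context (R : realType) d (T : measurableType d) (P : {measure set T -> \bar R}).
Variable g : T -> T.
Hypotheses (mg : measurable_fun setT g)
  (Pg : forall A, measurable A -> P (g @^-1` A) = P A).

Lemma integral_comp_measure_preserving (f : T -> \bar R) :
  measurable_fun setT f -> (\int[P]_x f (g x) = \int[P]_x f x)%E.
Proof.
move=> mf; rewrite [LHS]integralE [RHS]integralE.
rewrite -[fun x => f (g x)]/(f \o g) funepos_comp funeneg_comp.
have pushE h : measurable_fun setT h -> (forall x, 0 <= h x)%E ->
    (\int[P]_x (h \o g) x = \int[P]_x h x)%E.
  move=> mh h0; transitivity (\int[pushforward P g]_x h x)%E.
    by rewrite ge0_integral_pushforward.
  by apply: eq_measure_integral => A mA _; exact: Pg.
by rewrite !pushE //; [exact: measurable_funeneg|exact: measurable_funepos].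
Qed.

Lemma Rintegral_comp_measure_preserving (f : T -> R) :
  measurable_fun setT f -> Rintegral P setT (f \o g) = Rintegral P setT f.
Proof.
move=> mf; congr fine; apply: integral_comp_measure_preserving.
exact/measurable_EFinP.
Qed.

Lemma cintegral_comp_measure_preserving (f : T -> Cx R) :
  measurable_fun setT (fun w => complex.Re (f w)) ->
  measurable_fun setT (fun w => complex.Im (f w)) ->
  cintegral P (f \o g) = cintegral P f.
Proof.
move=> mRe mIm; rewrite /cintegral.
by rewrite -(Rintegral_comp_measure_preserving mRe)
  -(Rintegral_comp_measure_preserving mIm).
Qed.

End measure_preserving_integral.

Lemma measurable_fun_continuous_comp (R : realType) d (T : measurableType d)
  (X : topologicalType) (h : T -> X) (g : X -> R) :
  (forall U, open U -> measurable (h @^-1` U)) -> continuous g ->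
  measurable_fun setT (g \o h).
Proof.
move=> mh cg; apply: (measurability _ (RGenOpens.measurableE R)).
move=> _ [_ [a [b ->] <-]]; rewrite setTI.
apply: (mh (g @^-1` `]a, b[%classic)).
by move/continuousP: cg; apply; exact: interval_open.
Qed.

Lemma continuous_kernel_sectionl (R : realType) (X : topologicalType)
  (k : X -> X -> Cx R) (y : X) : continuous_kernel k ->
  continuous (fun z => complex.Re (k z y)) /\
  continuous (fun z => complex.Im (k z y)).
Proof.
have pair_y : continuous (fun z : X => (z, y)).
  by move=> z; apply: cvg_pair; [exact: cvg_id | exact: cvg_cst].
case=> cRe cIm; split=> z.
  exact: continuous_comp (pair_y z) (cRe (z, y)).
exact: continuous_comp (pair_y z) (cIm (z, y)).
Qed.

Lemma Tset_opp (R : realType) (discrete : bool) (t : R) :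
  Tset discrete t -> Tset discrete (- t).
Proof. by rewrite /Tset; case: discrete => //= ?; rewrite rpredN. Qed.

Section random_dynamical_system.
Context (R : realType) d (Om : measurableType d) (X : topologicalType).

Lemma measurable_section_sigma_rectangles (t : R) (x : X)
  (E : set (R * Om * X)) :
  <<s @rectangles R d Om X >> E -> measurable [set w | E (t, w, x)].
Proof.
suff sub : <<s @rectangles R d Om X >> `<=`
    [set E | measurable [set w | E (t, w, x)]].
  exact: sub.
apply: smallest_sub.
  split=> [|A mA|F mF]; first exact: measurable0.
    exact: measurableD measurableT mA.
  exact: bigcupT_measurable mF.
move=> _ [A [B [C [_ [mB [_ ->]]]]]] /=.
have [At|nAt] := pselect (A t); last first.
  by rewrite (_ : [set w | _] = set0) //; apply/seteqP; split=> w //= [].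
have [Cx|nCx] := pselect (C x); last first.
  by rewrite (_ : [set w | _] = set0) //; apply/seteqP; split=> w //= [_ []].
rewrite (_ : [set w | _] = B) //.
by apply/seteqP; split=> w /=; [case=> _ [] | split].
Qed.

Variables (discrete : bool) (theta : R -> Om -> Om) (M : set X).
Variable Phi : R -> Om -> X -> X.
Hypothesis Phi_rds : rds discrete theta M Phi.

Lemma rds_preimage_open_measurable (t : R) (x : X) (U : set X) :
  M x -> Tset discrete t -> open U ->
  measurable ((fun w => Phi t w x) @^-1` U).
Proof.
case: Phi_rds => _ mPhi _ _ Mx Tt oU.
have := measurable_section_sigma_rectangles t x (mPhi U (sub_sigma_algebra oU)).
by congr measurable; apply/seteqP; split=> w /=; [case=> _ [] | split].
Qed.

End random_dynamical_system.

Theorem proposition2 (R : realType) (d : measure_display) (Om : measurableType d)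
  (P : probability Om R) (discrete : bool) (theta : R -> Om -> Om)
  (X : topologicalType) (k : X -> X -> Cx R) (M : set X)
  (Phi : R -> Om -> X -> X) :
  mds discrete P theta ->
  pos_def_kernel k -> bounded_kernel k -> continuous_kernel k ->
  open M ->
  rds discrete theta M Phi ->
  forall x t, M x -> Tset discrete t ->
    iota_adj P (span_elt k (PF theta Phi t (iota_span Om [:: (1, x)])))
    = Hk_integral P (fun w => k (Phi t w x)).
Proof.
move=> [mtheta Ptheta _ _] _ _ kc _ Phi_rds x t Mx Tt.
have Tnt := Tset_opp Tt.
have mPhi := rds_preimage_open_measurable Phi_rds Mx Tt.
apply/funext => y; have [cRe cIm] := continuous_kernel_sectionl y kc.
rewrite /iota_adj /span_elt /PF /iota_span /Hk_integral /=.
under eq_fun do rewrite big_seq1 /kbold_sec /phibold /= mulr1.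
exact: (cintegral_comp_measure_preserving (mtheta _ Tnt) (Ptheta _ Tnt)
  (measurable_fun_continuous_comp mPhi cRe)
  (measurable_fun_continuous_comp mPhi cIm)).
Qed.
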